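(* Let \(a,b,c\) be positive integers and let \(m\) be a positive integer that is not a perfect square. Then \((a,\,b+c\sqrt m)\) spans \(1\) in \(\mathbb Z[\sqrt m]\) if and only if \((a,\,b^2-c^2m)\) spans \(1\) in \(\mathbb Z\), i.e. \(\gcd(a,b^2-c^2m)=1\).
   Context: \(\mathbb Z[\sqrt m]=\{u+v\sqrt m\mid u,v\in\mathbb Z\}\). For a commutative ring \(R\) with \(1\), a pair \((\alpha_1,\alpha_2)\) spans \(1\) in \(R\) if \(\lambda_1\alpha_1+\lambda_2\alpha_2=1\) for some \(\lambda_1,\lambda_2\in R\). *)

From Stdlib Require Import ZArith.
Open Scope Z_scope.

(* Elements u + v*sqrt m of Z[sqrt m], represented by the pair (u, v). *)
Record Zsqrt := mkZsqrt { re : Z; im : Z }.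

Definition zs_add (x y : Zsqrt) : Zsqrt :=
  mkZsqrt (re x + re y) (im x + im y).

(* (u1 + v1 sqrt m)(u2 + v2 sqrt m) = (u1 u2 + m v1 v2) + (u1 v2 + v1 u2) sqrt m *)
Definition zs_mul (m : Z) (x y : Zsqrt) : Zsqrt :=
  mkZsqrt (re x * re y + m * im x * im y) (re x * im y + im x * re y).

Definition zs_one : Zsqrt := mkZsqrt 1 0.

Definition spans1_Zsqrt (m : Z) (a1 a2 : Zsqrt) : Prop :=
  exists l1 l2 : Zsqrt, zs_add (zs_mul m l1 a1) (zs_mul m l2 a2) = zs_one.

Definition spans1_Z (x y : Z) : Prop :=
  exists l1 l2 : Z, l1 * x + l2 * y = 1.

Definition is_square (m : Z) : Prop := exists k : Z, k * k = m.

From Stdlib Require Import ZArith.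
Open Scope Z_scope.

(* Write beta = b + c sqrt m and N(x) = x * conj x for the norm.  If
   l1 a + l2 beta = 1, taking norms gives 1 = N(l1 a + l2 beta), which is
   congruent to N(l2) N(beta) modulo a; hence a and N(beta) = b^2 - c^2 m are
   coprime.  Conversely, from x a + y N(beta) = 1 one reads off the
   combination x a + (y conj beta) beta = 1 in Z[sqrt m].  Neither the signs
   of a, b, c, m nor the non-squareness of m play any role. *)

Definition zs_of_Z (n : Z) : Zsqrt := mkZsqrt n 0.

Definition zs_conj (x : Zsqrt) : Zsqrt := mkZsqrt (re x) (- im x).

Definition zs_norm (m : Z) (x : Zsqrt) : Z := re x * re x - m * im x * im x.

Lemma zs_mul_conj (m : Z) (x : Zsqrt) :
  zs_mul m (zs_conj x) x = zs_of_Z (zs_norm m x).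
Proof.
  destruct x as [u v].
  unfold zs_mul, zs_conj, zs_of_Z, zs_norm; cbn [re im]; f_equal; ring.
Qed.

Lemma zs_mulA (m : Z) (x y z : Zsqrt) :
  zs_mul m (zs_mul m x y) z = zs_mul m x (zs_mul m y z).
Proof.
  destruct x as [u1 v1], y as [u2 v2], z as [u3 v3].
  unfold zs_mul; cbn [re im]; f_equal; ring.
Qed.

Lemma zs_mul_of_Z (m n : Z) (x : Zsqrt) :
  zs_mul m x (zs_of_Z n) = mkZsqrt (re x * n) (im x * n).
Proof.
  destruct x as [u v].
  unfold zs_mul, zs_of_Z; cbn [re im]; f_equal; ring.
Qed.

Lemma zs_norm_mul (m : Z) (x y : Zsqrt) :
  zs_norm m (zs_mul m x y) = zs_norm m x * zs_norm m y.
Proof.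
  destruct x as [u1 v1], y as [u2 v2].
  unfold zs_norm, zs_mul; cbn [re im]; ring.
Qed.

Lemma zs_norm_add_mul_of_Z (m a : Z) (l y : Zsqrt) :
  zs_norm m (zs_add (zs_mul m l (zs_of_Z a)) y)
  = a * (a * zs_norm m l + 2 * (re l * re y - m * im l * im y)) + zs_norm m y.
Proof.
  destruct l as [p q], y as [r s].
  unfold zs_norm, zs_add, zs_mul, zs_of_Z; cbn [re im]; ring.
Qed.

Lemma spans1_Zsqrt_norm (m a : Z) (beta : Zsqrt) :
  spans1_Zsqrt m (zs_of_Z a) beta -> spans1_Z a (zs_norm m beta).
Proof.
  intros [l1 [l2 Hspan]].
  assert (Hnorm : zs_norm m (zs_add (zs_mul m l1 (zs_of_Z a)) (zs_mul m l2 beta)) = 1)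
    by (rewrite Hspan; unfold zs_norm, zs_one; cbn [re im]; ring).
  rewrite zs_norm_add_mul_of_Z, zs_norm_mul in Hnorm.
  exists (a * zs_norm m l1
          + 2 * (re l1 * re (zs_mul m l2 beta) - m * im l1 * im (zs_mul m l2 beta))),
         (zs_norm m l2).
  rewrite <- Hnorm; ring.
Qed.

Lemma norm_spans1_Zsqrt (m a : Z) (beta : Zsqrt) :
  spans1_Z a (zs_norm m beta) -> spans1_Zsqrt m (zs_of_Z a) beta.
Proof.
  intros [x [y Hxy]].
  exists (zs_of_Z x), (zs_mul m (zs_of_Z y) (zs_conj beta)).
  rewrite zs_mulA, zs_mul_conj, !zs_mul_of_Z.
  unfold zs_add, zs_mul, zs_of_Z, zs_one; cbn [re im].
  rewrite Hxy; f_equal; ring.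
Qed.

Lemma spans1_Z_gcd (x y : Z) : spans1_Z x y <-> Z.gcd x y = 1.
Proof. split; [apply Z.bezout_1_gcd | apply Z.gcd_bezout]. Qed.

Theorem lemma1 (a b c m : Z) (ha : 0 < a) (hb : 0 < b) (hc : 0 < c)
  (hm : 0 < m) (hsq : ~ is_square m) :
  (spans1_Zsqrt m (mkZsqrt a 0) (mkZsqrt b c) <->
   spans1_Z a (b * b - c * c * m)) /\
  (spans1_Z a (b * b - c * c * m) <-> Z.gcd a (b * b - c * c * m) = 1).
Proof.
  replace (b * b - c * c * m) with (zs_norm m (mkZsqrt b c))
    by (unfold zs_norm; cbn [re im]; ring).
  split.
  - split; [apply spans1_Zsqrt_norm | apply norm_spans1_Zsqrt].
  - apply spans1_Z_gcd.
Qed.
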